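(* Let $A$ be a unital algebra over a field $F$ with $\operatorname{char}(F)\neq2$ and $\mathcal{A}=M_n(A)$, $n\ge2$. Then $\operatorname{QJDer}(\mathcal{A})=\operatorname{Cent}(\mathcal{A})+\operatorname{Der}(\mathcal{A})$.
   Context: $x\circ y=xy+yx$. $\operatorname{QJDer}(\mathcal{A})$: linear $f:\mathcal{A}\to\mathcal{A}$ for which there is a linear $h$ with $f(x)\circ y+x\circ f(y)=h(x\circ y)$ for all $x,y$. $\operatorname{Cent}(\mathcal{A})$: linear $f$ with $f(xy)=f(x)y=xf(y)$. $\operatorname{Der}(\mathcal{A})$: linear $d$ with $d(xy)=d(x)y+xd(y)$. Sums of sets of maps are sets of pointwise sums. *)

From HB Require Import structures.
From mathcomp Require Import all_boot all_order all_algebra.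
Set Implicit Arguments. Unset Strict Implicit. Unset Printing Implicit Defensive.
Import GRing.Theory.
Local Open Scope ring_scope.

Section Defs.
Variables (F : fieldType) (A : algType F) (n : nat).
Notation MA := 'M[A]_n.

Definition mxscale (a : F) (X : MA) : MA := map_mx (fun y => a *: y) X.

Definition Flinear (f : MA -> MA) : Prop :=
  (forall x y, f (x + y) = f x + f y) /\
  (forall (a : F) x, f (mxscale a x) = mxscale a (f x)).

Definition jprod (x y : MA) : MA := x *m y + y *m x.

Definition isQJDer (f : MA -> MA) : Prop :=
  Flinear f /\ exists h : MA -> MA, Flinear h /\
    forall x y, jprod (f x) y + jprod x (f y) = h (jprod x y).

Definition isCent (f : MA -> MA) : Prop :=
  Flinear f /\ forall x y, f (x *m y) = f x *m y /\ f (x *m y) = x *m f y.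

Definition isDer (d : MA -> MA) : Prop :=
  Flinear d /\ forall x y, d (x *m y) = d x *m y + x *m d y.

End Defs.

From HB Require Import structures.
From mathcomp Require Import all_boot all_order all_algebra.
Set Implicit Arguments. Unset Strict Implicit. Unset Printing Implicit Defensive.
Import GRing.Theory.
Local Open Scope ring_scope.

(* Putting y = 1 in the defining identity gives 2 h(x) = 2 f(x) + x o c, where
   c = f(1).  Testing the identity on the matrix units E_kk and a E_ij shows that
   c is a scalar matrix with central entry, so x |-> c x lies in the centroid,
   h(x) = f(x) + c x, and d(x) = f(x) - c x is a Jordan derivation.  After
   subtracting a suitable inner derivation, d vanishes on every E_kk and maps
   a E_ij to phi_ij(a) E_ij with phi_pq(ab) = phi_pr(a) b + a phi_rq(b) for all
   p, q, r (n >= 2 supplies the auxiliary index when p = q = r): this is the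
   Leibniz rule read entrywise.  Conversely, for g in the centroid and d a
   derivation, g + d is quasi-Jordan with companion 2g + d. *)

Lemma morph_add0 (U V : zmodType) (f : U -> V) : {morph f : x y / x + y} -> f 0 = 0.
Proof. by move=> fD; apply: (addrI (f 0)); rewrite -fD !addr0. Qed.

Lemma exists_ord_neq n (i : 'I_n) : (2 <= n)%N -> exists j : 'I_n, j != i.
Proof.
move=> n_ge2; have n_gt0 : (0 < n)%N by apply: ltnW.
have [->|i_neq0] := eqVneq i (Ordinal n_gt0); first by exists (Ordinal n_ge2).
by exists (Ordinal n_gt0); rewrite eq_sym.
Qed.

Section MatrixAlgebra.
Variables (F : fieldType) (A : algType F) (n : nat).
Notation MA := 'M[A]_n.
Implicit Types (a b : A) (x y : MA) (i j k l p q r : 'I_n).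

Definition elem_mx i j a : MA := \matrix_(p, q) if (p == i) && (q == j) then a else 0.

Lemma elem_mxE i j a p q : elem_mx i j a p q = if (p == i) && (q == j) then a else 0.
Proof. exact: mxE. Qed.

Lemma addmxE x y p q : (x + y) p q = x p q + y p q.
Proof. exact: mxE. Qed.

Lemma elem_mulmxE i j a x p q :
  (elem_mx i j a *m x) p q = if p == i then a * x j q else 0.
Proof.
rewrite !mxE (bigD1 j) //= big1 => [|r /negbTE r_neq_j]; rewrite elem_mxE.
  by rewrite eqxx andbT; case: (p == i); rewrite ?mul0r addr0.
by rewrite r_neq_j andbF mul0r.
Qed.

Lemma mulmx_elemE i j a x p q :
  (x *m elem_mx i j a) p q = if q == j then x p i * a else 0.
Proof.
rewrite !mxE (bigD1 i) //= big1 => [|r /negbTE r_neq_i]; rewrite elem_mxE.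
  by rewrite !eqxx; case: (q == j); rewrite ?mulr0 addr0.
by rewrite r_neq_i mulr0.
Qed.

Lemma mul_elem_mx i j k l a b :
  elem_mx i j a *m elem_mx k l b = if j == k then elem_mx i l (a * b) else 0.
Proof.
apply/matrixP => p q; rewrite elem_mulmxE !elem_mxE.
case: (j == k); rewrite ?elem_mxE ?mxE; case: (p == i); rewrite ?mulr0 //.
by case: (q == l); rewrite ?mulr0.
Qed.

Lemma elem_mx_add i j : {morph elem_mx i j : a b / a + b}.
Proof. by move=> a b; apply/matrixP => p q; rewrite !mxE; case: ifP; rewrite ?addr0. Qed.

Lemma sum_elem_mxE (G : 'I_n -> 'I_n -> A) p q :
  (\sum_i \sum_j elem_mx i j (G i j)) p q = G p q.
Proof.
rewrite summxE (bigD1 p) //= summxE (bigD1 q) //=.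
rewrite elem_mxE !eqxx big1 => [|j /negbTE q_neq_j]; last first.
  by rewrite elem_mxE eqxx eq_sym q_neq_j.
rewrite big1 => [|i /negbTE p_neq_i]; first by rewrite !addr0.
by rewrite summxE big1 // => j _; rewrite elem_mxE eq_sym p_neq_i.
Qed.

Lemma sum_elem_mx x : \sum_i \sum_j elem_mx i j (x i j) = x.
Proof. by apply/matrixP => p q; rewrite sum_elem_mxE. Qed.

Lemma jprodC x y : jprod x y = jprod y x.
Proof. exact: addrC. Qed.

Lemma jprodE x y p q : jprod x y p q = (x *m y) p q + (y *m x) p q.
Proof. exact: mxE. Qed.

Lemma jprod0l x : jprod 0 x = 0.
Proof. by rewrite /jprod mulmx0 mul0mx addr0. Qed.

Lemma jprodDl x y z : jprod (x + y) z = jprod x z + jprod y z.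
Proof. by rewrite /jprod mulmxDl mulmxDr addrACA. Qed.

Lemma jprodDr x y z : jprod x (y + z) = jprod x y + jprod x z.
Proof. by rewrite !(jprodC x) jprodDl. Qed.

Lemma jprodBl x y z : jprod (x - y) z = jprod x z - jprod y z.
Proof. by rewrite /jprod mulmxBl mulmxBr opprD addrACA. Qed.

Lemma jprodBr x y z : jprod x (y - z) = jprod x y - jprod x z.
Proof. by rewrite !(jprodC x) jprodBl. Qed.

Lemma jprod_elem i j k l a b :
  jprod (elem_mx i j a) (elem_mx k l b) =
  (if j == k then elem_mx i l (a * b) else 0) + (if l == i then elem_mx k j (b * a) else 0).
Proof. by rewrite /jprod !mul_elem_mx. Qed.

Lemma jprod_unit x k :
  jprod x (elem_mx k k 1) =
  \matrix_(p, q) ((if q == k then x p k else 0) + (if p == k then x k q else 0)).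
Proof. by apply/matrixP => p q; rewrite jprodE mulmx_elemE elem_mulmxE !mxE mulr1 mul1r. Qed.

Lemma jprod_unitE x k p q :
  jprod x (elem_mx k k 1) p q =
  (if q == k then x p k else 0) + (if p == k then x k q else 0).
Proof. by rewrite jprod_unit mxE. Qed.

Lemma jprod_unit_idem k :
  jprod (elem_mx k k 1) (elem_mx k k 1) = elem_mx k k 1 + elem_mx k k 1.
Proof. by rewrite jprod_elem eqxx mulr1. Qed.

Definition leibniz (d : MA -> MA) := forall x y, d (x *m y) = d x *m y + x *m d y.

Definition jordan_leibniz (d : MA -> MA) :=
  forall x y, d (jprod x y) = jprod (d x) y + jprod x (d y).

Lemma leibniz_jordan d : {morph d : x y / x + y} -> leibniz d -> jordan_leibniz d.
Proof.
by move=> d_add d_der x y; rewrite /jprod d_add !d_der [d y *m x + _]addrC addrACA.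
Qed.

Lemma leibnizD d1 d2 : leibniz d1 -> leibniz d2 -> leibniz (fun x => d1 x + d2 x).
Proof.
by move=> d1_der d2_der x y; rewrite d1_der d2_der mulmxDl mulmxDr addrACA.
Qed.

Lemma jordan_leibnizB d1 d2 : jordan_leibniz d1 -> jordan_leibniz d2 ->
  jordan_leibniz (fun x => d1 x - d2 x).
Proof.
by move=> d1_jder d2_jder x y; rewrite d1_jder d2_jder jprodBl jprodBr opprD addrACA.
Qed.

Lemma centroid_jprod g : {morph g : x y / x + y} ->
  (forall x y, g (x *m y) = g x *m y /\ g (x *m y) = x *m g y) ->
  forall x y, jprod (g x) y + jprod x (g y) = g (jprod x y) + g (jprod x y).
Proof.
move=> g_add g_cent x y; rewrite /jprod g_add.
by rewrite -(g_cent x y).1 -(g_cent y x).2 -(g_cent x y).2 -(g_cent y x).1 addrACA.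
Qed.

Lemma central_mull_centroid c : (forall z, c *m z = z *m c) ->
  forall x y, c *m (x *m y) = c *m x *m y /\ c *m (x *m y) = x *m (c *m y).
Proof. by move=> c_central x y; rewrite !mulmxA c_central. Qed.

Definition inner_der (w x : MA) : MA := w *m x - x *m w.

Lemma inner_der_add w : {morph inner_der w : x y / x + y}.
Proof. by move=> x y; rewrite /inner_der mulmxDr mulmxDl opprD addrACA. Qed.

Lemma inner_der_leibniz w : leibniz (inner_der w).
Proof. by move=> x y; rewrite /inner_der mulmxBl mulmxBr !mulmxA addrA subrK. Qed.

Lemma mxscaleD (s : F) x y : mxscale s (x + y) = mxscale s x + mxscale s y.
Proof. by apply/matrixP => p q; rewrite !mxE scalerDr. Qed.

Lemma mxscaleB (s : F) x y : mxscale s (x - y) = mxscale s x - mxscale s y.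
Proof. by apply/matrixP => p q; rewrite !mxE scalerBr. Qed.

Lemma mxscale_mulmxr (s : F) x y : mxscale s (x *m y) = x *m mxscale s y.
Proof.
apply/matrixP => p q; rewrite !mxE scaler_sumr.
by apply: eq_bigr => r _; rewrite mxE scalerAr.
Qed.

Lemma FlinearD f g : Flinear f -> Flinear g -> Flinear (fun x => f x + g x).
Proof.
move=> [f_add f_scale] [g_add g_scale]; split=> [x y|s x].
  by rewrite f_add g_add addrACA.
by rewrite f_scale g_scale mxscaleD.
Qed.

Lemma FlinearB f g : Flinear f -> Flinear g -> Flinear (fun x => f x - g x).
Proof.
move=> [f_add f_scale] [g_add g_scale]; split=> [x y|s x].
  by rewrite f_add g_add opprD addrACA.
by rewrite f_scale g_scale mxscaleB.
Qed.

Lemma Flinear_mulmx c : Flinear (fun x : MA => c *m x).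
Proof. by split=> [x y|s x]; rewrite ?mulmxDr ?mxscale_mulmxr. Qed.

End MatrixAlgebra.

Section TwoTorsionFree.
Variables (F : fieldType) (A : algType F) (n : nat).
Hypothesis charF2 : (2 \notin [pchar F])%N.
Notation MA := 'M[A]_n.
Notation E := (@elem_mx F A n).
Implicit Types (a b : A) (x y : MA) (i j k p q r : 'I_n).

Lemma double_inj a b : a + a = b + b -> a = b.
Proof.
have two_neq0 : (2%:R : F) != 0 by move: charF2; rewrite inE.
move=> /(congr1 (fun c => (2%:R : F)^-1 *: c)).
by rewrite -!mulr2n -!scaler_nat !scalerA mulVf // !scale1r.
Qed.

Lemma double_mx_inj x y : x + x = y + y -> x = y.
Proof.
by move=> /matrixP xy; apply/matrixP => p q; apply: double_inj; have := xy p q; rewrite !mxE.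
Qed.

Lemma jprod_unit_eq0 x k :
  jprod x (E k k 1) = 0 -> (forall q, x k q = 0) /\ (forall p, x p k = 0).
Proof.
move=> /matrixP x_orth.
have {}x_orth p q : (if q == k then x p k else 0) + (if p == k then x k q else 0) = 0.
  by rewrite -jprod_unitE x_orth mxE.
have x_kk : x k k = 0 by apply: double_inj; rewrite addr0; have := x_orth k k; rewrite eqxx.
split=> [q|p].
  have [->//|/negbTE q_neq_k] := eqVneq q k.
  by have := x_orth k q; rewrite q_neq_k eqxx add0r.
have [->//|/negbTE p_neq_k] := eqVneq p k.
by have := x_orth p k; rewrite p_neq_k eqxx addr0.
Qed.

Lemma jprod_unit_fixed x k : jprod (E k k 1) x = x ->
  x k k = 0 /\ (forall p q, p != k -> q != k -> x p q = 0).
Proof.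
rewrite jprodC => /matrixP x_fixed.
have {}x_fixed p q : x p q = (if q == k then x p k else 0) + (if p == k then x k q else 0).
  by rewrite -jprod_unitE x_fixed.
split=> [|p q /negbTE p_neq_k /negbTE q_neq_k]; last by rewrite x_fixed p_neq_k q_neq_k addr0.
by apply: (@addrI _ (x k k)); rewrite addr0 [RHS]x_fixed eqxx.
Qed.

Section JordanDerivationVanishingOnUnits.
Variable D : MA -> MA.
Hypotheses (D_add : {morph D : x y / x + y}) (D_jordan : jordan_leibniz D).
Hypothesis D_unit : forall k, D (E k k 1) = 0.

Let D0 : D 0 = 0 := morph_add0 D_add.

Lemma jder_elem_diag i a p q : ~~ ((p == i) && (q == i)) -> D (E i i a) p q = 0.
Proof.
move=> not_ii.
have D_orth k : k != i -> jprod (D (E i i a)) (E k k 1) = 0.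
  move=> /negbTE k_neq_i; have := D_jordan (E i i a) (E k k 1).
  by rewrite jprod_elem eq_sym k_neq_i addr0 D0 D_unit (jprodC _ 0) jprod0l addr0.
have [p_eq_i|p_neq_i] := eqVneq p i.
  have q_neq_i : q != i by move: not_ii; rewrite p_eq_i eqxx.
  exact: (jprod_unit_eq0 (D_orth q q_neq_i)).2.
exact: (jprod_unit_eq0 (D_orth p p_neq_i)).1.
Qed.

Lemma jder_elem_fixed i j a : i != j ->
  jprod (E i i 1) (D (E i j a)) = D (E i j a) /\ jprod (E j j 1) (D (E i j a)) = D (E i j a).
Proof.
move=> /negbTE i_neq_j; rewrite eq_sym in i_neq_j.
have D_fixed k : jprod (E k k 1) (E i j a) = E i j a ->
    jprod (E k k 1) (D (E i j a)) = D (E i j a).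
  by move=> E_fixed; rewrite -{2}E_fixed D_jordan D_unit jprod0l add0r.
split; apply: D_fixed; rewrite jprod_elem !eqxx i_neq_j.
  by rewrite mul1r addr0.
by rewrite mulr1 add0r.
Qed.

Lemma jder_elem_transpose i j a : i != j -> D (E i j a) j i = 0.
Proof.
move=> /negbTE i_neq_j; have j_neq_i : (j == i) = false by rewrite eq_sym.
have D_unit_ji : D (E i j 1) j i = 0.
  have := D_jordan (E i j 1) (E i j 1).
  rewrite jprod_elem j_neq_i addr0 D0 => /matrixP /(_ i i).
  rewrite mxE [RHS]mxE !jprodE !elem_mulmxE !mulmx_elemE i_neq_j eqxx mul1r add0r addr0.
  by move/esym; rewrite -[0 in RHS]addr0 => /double_inj.
have E_split : jprod (E i i a) (E i j 1) = E i j a.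
  by rewrite jprod_elem eqxx j_neq_i mulr1 addr0.
rewrite -E_split D_jordan mxE !jprodE !elem_mulmxE !mulmx_elemE i_neq_j j_neq_i eqxx.
by rewrite D_unit_ji mul0r !addr0.
Qed.

Lemma jder_elem_support i j a p q : ~~ ((p == i) && (q == j)) -> D (E i j a) p q = 0.
Proof.
have [<-|i_neq_j] := eqVneq i j; first exact: jder_elem_diag.
move=> not_ij.
have [ii_0 off_i] := jprod_unit_fixed (jder_elem_fixed a i_neq_j).1.
have [jj_0 off_j] := jprod_unit_fixed (jder_elem_fixed a i_neq_j).2.
have [p_eq_i|p_neq_i] := eqVneq p i.
  have q_neq_j : q != j by move: not_ij; rewrite p_eq_i eqxx.
  have [q_eq_i|q_neq_i] := eqVneq q i; first by rewrite p_eq_i q_eq_i.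
  by apply: off_j; rewrite // p_eq_i.
have [q_eq_i|q_neq_i] := eqVneq q i; last exact: off_i.
have [p_eq_j|p_neq_j] := eqVneq p j; first by rewrite p_eq_j q_eq_i jder_elem_transpose.
by apply: off_j; rewrite // q_eq_i.
Qed.

Definition jder_coef i j a := D (E i j a) i j.

Lemma jder_elem i j a : D (E i j a) = E i j (jder_coef i j a).
Proof.
apply/matrixP => p q; rewrite elem_mxE.
by case: ifPn => [/andP[/eqP-> /eqP->] //|/jder_elem_support].
Qed.

Lemma jder_coef_mul_offdiag p q r a b : p != q ->
  jder_coef p q (a * b) = jder_coef p r a * b + a * jder_coef r q b.
Proof.
rewrite eq_sym => /negbTE q_neq_p.
have E_mul : jprod (E p r a) (E r q b) = E p q (a * b).
  by rewrite jprod_elem eqxx q_neq_p addr0.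
have := D_jordan (E p r a) (E r q b).
rewrite E_mul !jder_elem !jprod_elem eqxx q_neq_p !addr0 -elem_mx_add.
by move=> /matrixP /(_ p q); rewrite !elem_mxE !eqxx.
Qed.

Lemma jder_coef_mul_diag p r a b : r != p ->
  jder_coef p p (a * b) = jder_coef p r a * b + a * jder_coef r p b.
Proof.
rewrite eq_sym => /negbTE p_neq_r.
have := D_jordan (E p r a) (E r p b).
rewrite jprod_elem !eqxx D_add !jder_elem !jprod_elem !eqxx => /matrixP /(_ p p).
by rewrite !mxE !eqxx p_neq_r /= !addr0.
Qed.

Hypothesis n_ge2 : (2 <= n)%N.

Lemma jder_coef_mul p q r a b :
  jder_coef p q (a * b) = jder_coef p r a * b + a * jder_coef r q b.
Proof.
have [<-|p_neq_q] := eqVneq p q; last exact: jder_coef_mul_offdiag.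
have [->|r_neq_p] := eqVneq r p; last exact: jder_coef_mul_diag.
have [m m_neq_p] := exists_ord_neq p n_ge2.
have p_neq_m : p != m by rewrite eq_sym.
have coef_split c : jder_coef p p c = jder_coef p m c + c * jder_coef m p 1.
  by rewrite -{1}[c]mulr1 (jder_coef_mul_diag _ _ m_neq_p) mulr1.
rewrite [LHS]coef_split (@jder_coef_mul_offdiag p m p a b p_neq_m) (coef_split b).
by rewrite mulrDr mulrA addrA.
Qed.

Lemma jder_entry x p q : D x p q = jder_coef p q (x p q).
Proof.
have D_sum I s (P : pred I) (G : I -> MA) :
    D (\sum_(i <- s | P i) G i) = \sum_(i <- s | P i) D (G i).
  exact: (big_morph D D_add D0).
rewrite -{1}[x]sum_elem_mx D_sum.
under eq_bigr do rewrite D_sum; under eq_bigr do under eq_bigr do rewrite jder_elem.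
by rewrite sum_elem_mxE.
Qed.

Lemma jder_coef_add p q : {morph jder_coef p q : a b / a + b}.
Proof. by move=> a b; rewrite /jder_coef elem_mx_add D_add mxE. Qed.

Lemma jder_vanishing_on_units_leibniz : leibniz D.
Proof.
move=> x y; apply/matrixP => p q.
rewrite jder_entry !mxE -big_split.
rewrite (big_morph _ (jder_coef_add p q) (morph_add0 (jder_coef_add p q))).
by apply: eq_bigr => r _; rewrite !jder_entry (jder_coef_mul p q r).
Qed.

End JordanDerivationVanishingOnUnits.

Section JordanDerivation.
Variable d : MA -> MA.
Hypotheses (d_add : {morph d : x y / x + y}) (d_jordan : jordan_leibniz d).

Lemma jder_unit_fixed k : jprod (E k k 1) (d (E k k 1)) = d (E k k 1).
Proof.
apply: double_mx_inj.
by rewrite -d_add -jprod_unit_idem d_jordan [jprod (d _) _]jprodC.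
Qed.

Lemma jder_units_orth k q : q != k -> d (E k k 1) k q + d (E q q 1) k q = 0.
Proof.
move=> /negbTE q_neq_k; have k_neq_q : (k == q) = false by rewrite eq_sym.
have := d_jordan (E k k 1) (E q q 1).
rewrite jprod_elem k_neq_q q_neq_k addr0 (morph_add0 d_add) => /matrixP /(_ k q).
rewrite mxE [RHS]mxE (jprodC (E k k 1)) !jprod_unitE !eqxx q_neq_k k_neq_q.
by rewrite addr0 add0r.
Qed.

(* Column q of [w] is column q of [d E_qq]: as [d E_kk] lives on row and column k
   with [d E_kk k q = - d E_qq k q], this gives [w E_kk - E_kk w = d E_kk]. *)
Let w : MA := \matrix_(p, q) d (E q q 1) p q.

Lemma jder_sub_inner_unit k : d (E k k 1) - inner_der w (E k k 1) = 0.
Proof.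
have [kk_0 off_k] := jprod_unit_fixed (jder_unit_fixed k).
apply/matrixP => p q; rewrite /inner_der !(mulmx_elemE, elem_mulmxE, mxE) mulr1 mul1r.
have [->|q_neq_k] := eqVneq q k; have [->|p_neq_k] := eqVneq p k.
- by rewrite kk_0 subrr oppr0 addr0.
- by rewrite subr0 subrr.
- by rewrite sub0r opprK jder_units_orth.
- by rewrite off_k // subrr oppr0 addr0.
Qed.

Hypothesis n_ge2 : (2 <= n)%N.

Lemma jordan_leibniz_leibniz : leibniz d.
Proof.
pose D x := d x - inner_der w x.
have D_add : {morph D : x y / x + y}.
  by move=> x y; rewrite /D d_add inner_der_add opprD addrACA.
have D_jordan : jordan_leibniz D.
  exact: jordan_leibnizB d_jordan (leibniz_jordan (inner_der_add w) (inner_der_leibniz w)).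
have D_der := jder_vanishing_on_units_leibniz D_add D_jordan jder_sub_inner_unit n_ge2.
have dE x : d x = D x + inner_der w x by rewrite subrK.
by move=> x y; rewrite !dE (leibnizD D_der (inner_der_leibniz w)).
Qed.

End JordanDerivation.

Section QuasiJordanDerivation.
Variables f h : MA -> MA.
Hypothesis h_add : {morph h : x y / x + y}.
Hypothesis f_qjder : forall x y, jprod (f x) y + jprod x (f y) = h (jprod x y).
Let c := f 1%:M.

Lemma qjder_double z : h z + h z = f z + f z + jprod c z.
Proof.
by have := f_qjder z 1%:M; rewrite /jprod !mulmx1 !mul1mx h_add [c *m z + _]addrC => <-.
Qed.

Lemma qjder_unit k :
  jprod (f (E k k 1)) (E k k 1) + jprod (f (E k k 1)) (E k k 1) =
  f (E k k 1) + f (E k k 1) + jprod c (E k k 1).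
Proof.
by rewrite -qjder_double -h_add -jprod_unit_idem -f_qjder [jprod (E k k 1) _]jprodC.
Qed.

Lemma qjder_one_offdiag k q : q != k -> c k q = 0.
Proof.
move=> /negbTE q_neq_k; move/matrixP: (qjder_unit k) => /(_ k q).
rewrite !jprod_unit !mxE eqxx q_neq_k !add0r.
by move=> /esym /eqP; rewrite -subr_eq0 addrC addrK => /eqP.
Qed.

Lemma qjder_unit_off k p q : p != k -> q != k -> f (E k k 1) p q = 0.
Proof.
move=> /negbTE p_neq_k /negbTE q_neq_k; move/matrixP: (qjder_unit k) => /(_ p q).
rewrite !jprod_unit !mxE p_neq_k q_neq_k !addr0.
by rewrite -[0 in X in X = _]addr0 => /esym /double_inj.
Qed.

Lemma qjder_unit_diag k : f (E k k 1) k k = c k k.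
Proof.
move/matrixP: (qjder_unit k) => /(_ k k).
by rewrite !jprod_unit !mxE eqxx => /addrI /double_inj.
Qed.

Lemma qjder_one_diag_mul i j a : i != j -> c i i * a = a * c j j.
Proof.
rewrite eq_sym => j_neq_i.
have E_fixed : jprod (E i j a) (E i i 1) = E i j a.
  by rewrite jprod_elem eqxx (negbTE j_neq_i) mul1r add0r.
have := qjder_double (E i j a); rewrite -{1 2}E_fixed -f_qjder => /matrixP /(_ i j).
rewrite !(elem_mulmxE, mulmx_elemE, jprodE, addmxE) eqxx (negbTE j_neq_i).
rewrite (qjder_unit_off j_neq_i j_neq_i) qjder_unit_diag mulr0 !add0r mul1r.
by rewrite addrACA eqxx => /addrI /addrI.
Qed.

Lemma qjder_one_diag_const p q : c p p = c q q.
Proof.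
have [->//|p_neq_q] := eqVneq p q.
by have := qjder_one_diag_mul 1 p_neq_q; rewrite mulr1 mul1r.
Qed.

Hypothesis n_ge2 : (2 <= n)%N.

Lemma qjder_one_central x : c *m x = x *m c.
Proof.
apply/matrixP => p q; rewrite !mxE (bigD1 p) //= [in RHS](bigD1 q) //=.
rewrite big1 => [|r r_neq_p]; last by rewrite qjder_one_offdiag // mul0r.
rewrite [in RHS]big1 => [|r r_neq_q]; last by rewrite qjder_one_offdiag ?mulr0 // eq_sym.
have [j j_neq_p] := exists_ord_neq p n_ge2.
rewrite eq_sym in j_neq_p.
by rewrite !addr0 (qjder_one_diag_mul (x p q) j_neq_p) (qjder_one_diag_const j q).
Qed.

Lemma qjder_sub_one_jordan : jordan_leibniz (fun x => f x - c *m x).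
Proof.
have h_eq z : h z = f z + c *m z.
  by apply: double_mx_inj; rewrite qjder_double /jprod -qjder_one_central addrACA.
have c_centroid := central_mull_centroid qjder_one_central.
move=> x y; rewrite jprodBl jprodBr addrACA -opprD f_qjder h_eq.
by rewrite (centroid_jprod (mulmxDr c) c_centroid) opprD addrA addrK.
Qed.

End QuasiJordanDerivation.
End TwoTorsionFree.

Lemma qjder_cent_add_der (F : fieldType) (A : algType F) (n : nat) :
  (2 \notin [pchar F])%N -> (2 <= n)%N -> forall f : 'M[A]_n -> 'M[A]_n,
  isQJDer f -> exists g d, isCent g /\ isDer d /\ forall x, f x = g x + d x.
Proof.
move=> charF2 n_ge2 f [f_lin [h [h_lin f_qjder]]].
pose c := f 1%:M.
have c_central := qjder_one_central charF2 h_lin.1 f_qjder n_ge2.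
have d_lin := FlinearB f_lin (Flinear_mulmx c).
exists (fun x => c *m x), (fun x => f x - c *m x); split; [|split].
- by split; [exact: Flinear_mulmx | exact: central_mull_centroid].
- split=> //; apply: (jordan_leibniz_leibniz charF2 d_lin.1 _ n_ge2).
  exact: (qjder_sub_one_jordan charF2 h_lin.1 f_qjder n_ge2).
- by move=> x; rewrite addrC subrK.
Qed.

Lemma cent_add_der_qjder (F : fieldType) (A : algType F) (n : nat)
    (f g d : 'M[A]_n -> 'M[A]_n) :
  isCent g -> isDer d -> (forall x, f x = g x + d x) -> isQJDer f.
Proof.
move=> [g_lin g_cent] [d_lin d_der] f_eq.
have [fD fZ] := FlinearD g_lin d_lin.
split; first by split=> *; rewrite !f_eq ?fD ?fZ.
exists (fun x => g x + g x + d x); split; first exact: (FlinearD (FlinearD g_lin g_lin) d_lin).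
move=> x y; rewrite !f_eq jprodDl jprodDr addrACA (centroid_jprod g_lin.1 g_cent).
by rewrite -(leibniz_jordan d_lin.1 d_der).
Qed.

Theorem corollary4p3 (F : fieldType) (A : algType F) (n : nat)
  (hF : (2 \notin [pchar F])%N) (hn : (2 <= n)%N) :
  forall f : 'M[A]_n -> 'M[A]_n,
    isQJDer f <->
    exists g d : 'M[A]_n -> 'M[A]_n,
      isCent g /\ isDer d /\ forall x, f x = g x + d x.
Proof.
move=> f; split; first exact: qjder_cent_add_der.
by case=> g [d [g_cent [d_der f_eq]]]; exact: (cent_add_der_qjder g_cent d_der f_eq).
Qed.
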